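(* Let $n\ge5$ and let $\mathcal{W}=\mathcal{W}_1\cup\mathcal{W}_2\subset(\mathbb{R}^{4n})^{\otimes5}$ be the set defined below. Then the tensors in $\mathcal{W}$ are linearly independent. Moreover, if $\mathcal{T}_1\in\operatorname{Span}\mathcal{W}_1$ and $\mathcal{T}_2\in\operatorname{Span}\mathcal{W}_2$ satisfy $\mathcal{T}_1+\mathcal{T}_2=0$, then $\mathcal{T}_1=\mathcal{T}_2=0$.
   Context: All tensors are real. The set $\mathcal{W}$: for $i\in\{1,\dots,n\}$ let $\alpha_i\in\mathbb{R}^{2n}$ have entries $1$ at positions $2i-1,2i$ and $0$ elsewhere; $(a|b)\in\mathbb{R}^{4n}$ is concatenation. With $1\le i_1<i_2<i_3<i_4\le n$ and $1\le k_1<k_2\le n$ ranging over all choices, let $U$ be the set of vectors of the 16 types: $(\alpha_{i_1}+\alpha_{i_2}+\alpha_{i_3}+\alpha_{i_4}|0)$, $(\alpha_{i_1}+\alpha_{i_2}+\alpha_{i_3}|0)$, $(\alpha_{i_1}+\alpha_{i_2}|0)$, $(\alpha_{i_1}|0)$, $(\alpha_{i_1}+\alpha_{i_2}+\alpha_{i_3}+\alpha_{i_4}|\alpha_{k_1})$, $(\alpha_{i_1}+\alpha_{i_2}|\tfrac{(n-2)^2}{(n-3)(n-1)}\alpha_{k_1})$, $(\alpha_{i_1}|\tfrac{n-2}{n-3}\alpha_{k_1})$, $(\alpha_{i_1}|\tfrac{n-1}{n-4}\alpha_{k_1})$, $(\alpha_{i_1}+\alpha_{i_2}+\alpha_{i_3}|\alpha_{k_1}+\alpha_{k_2})$,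 $(\alpha_{i_1}+\alpha_{i_2}|\tfrac{n-2}{n-3}(\alpha_{k_1}+\alpha_{k_2}))$, $(\alpha_{i_1}+\alpha_{i_2}|\tfrac{n-2}{n-4}\alpha_{k_1})$, $(0|\alpha_{k_1})$, $(\alpha_{i_1}+\alpha_{i_2}+\alpha_{i_3}|\tfrac{n-3}{n-4}\alpha_{k_1})$, $(\alpha_{i_1}+\alpha_{i_2}+\alpha_{i_3}|\tfrac{n-2}{n-1}\alpha_{k_1})$, $(\alpha_{i_1}|\tfrac{n-1}{n-3}(\alpha_{k_1}+\alpha_{k_2}))$, $(0|\alpha_{k_1}+\alpha_{k_2})$ (types with only $i_1$ or only $k_1$ omit the other indices; $k_1$ alone ranges over $\{1,\dots,n\}$). Let $\pi(a_1,\dots,a_{2n},b_1,\dots,b_{2n})=(b_2,\dots,b_{2n},b_1,a_2,\dots,a_{2n},a_1)$. Set $\mathcal{W}_1=\{u^{\otimes5}:u\in U\}$, $\mathcal{W}_2=\{(\pi u)^{\otimes5}:u\in U\}$, $\mathcal{W}=\mathcal{W}_1\cup\mathcal{W}_2$; linear independence means the tensors $u^{\otimes5}$, $(\pi u)^{\otimes 5}$, $u\in U$, are linearly independent in $(\mathbb{R}^{4n})^{\otimes5}$. *)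

From HB Require Import structures.
From mathcomp Require Import all_boot all_order all_algebra.
Set Implicit Arguments. Unset Strict Implicit. Unset Printing Implicit Defensive.
Import Order.TTheory GRing.Theory Num.Theory.
Local Open Scope ring_scope.

Section Defs.
Variable R : realFieldType.

(** Vectors of R^(2n) / R^(4n) are represented as functions on 1-based
    positions [nat -> R] (only positions 1..2n, resp. 1..4n, matter). *)
Definition vec := nat -> R.

Definition vzero : vec := fun _ => 0.
Definition vscale (c : R) (a : vec) : vec := fun p => c * a p.

Definition alpha (i : nat) : vec :=
  fun p => if (p == (2 * i).-1)%N || (p == 2 * i)%N then 1 else 0.

(** sum of alpha_i over a set of indices, S : {set 'I_n}, index i <-> i+1 *)
Definition asum (n : nat) (S : {set 'I_n}) : vec :=
  fun p => \sum_(i in S) alpha (i.+1) p.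

Definition subsets (n m : nat) : seq {set 'I_n} :=
  enum [set S : {set 'I_n} | #|S| == m].

Definition cv (n : nat) (a b : vec) : vec :=
  fun p => if (p <= 2 * n)%N then a p else b (p - 2 * n)%N.

(** pi(a_1..a_2n, b_1..b_2n) = (b_2,...,b_2n,b_1,a_2,...,a_2n,a_1) *)
Definition piv (n : nat) (v : vec) : vec :=
  fun p => if (p <= 2 * n)%N then
             (if (p < 2 * n)%N then v (2 * n + p + 1)%N else v (2 * n + 1)%N)
           else let q := (p - 2 * n)%N in
             (if (q < 2 * n)%N then v (q + 1)%N else v 1%N).

Definition nR (k : nat) : R := k%:R.

(** The set U (as a list; duplicates are irrelevant, see lin_indep). *)
Definition U (n : nat) : seq vec :=
  let c6 := nR (n - 2) ^+ 2 / (nR (n - 3) * nR (n - 1)) in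
  let A := @asum n in
  let ks := iota 1 n in
  [seq cv n (A J) vzero | J <- subsets n 4] ++
  [seq cv n (A J) vzero | J <- subsets n 3] ++
  [seq cv n (A J) vzero | J <- subsets n 2] ++
  [seq cv n (A J) vzero | J <- subsets n 1] ++
  [seq cv n (A J) (alpha k) | J <- subsets n 4, k <- ks] ++
  [seq cv n (A J) (vscale c6 (alpha k)) | J <- subsets n 2, k <- ks] ++
  [seq cv n (A J) (vscale (nR (n - 2) / nR (n - 3)) (alpha k)) | J <- subsets n 1, k <- ks] ++
  [seq cv n (A J) (vscale (nR (n - 1) / nR (n - 4)) (alpha k)) | J <- subsets n 1, k <- ks] ++
  [seq cv n (A J) (A K) | J <- subsets n 3, K <- subsets n 2] ++
  [seq cv n (A J) (vscale (nR (n - 2) / nR (n - 3)) (A K)) | J <- subsets n 2, K <- subsets n 2] ++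
  [seq cv n (A J) (vscale (nR (n - 2) / nR (n - 4)) (alpha k)) | J <- subsets n 2, k <- ks] ++
  [seq cv n vzero (alpha k) | k <- ks] ++
  [seq cv n (A J) (vscale (nR (n - 3) / nR (n - 4)) (alpha k)) | J <- subsets n 3, k <- ks] ++
  [seq cv n (A J) (vscale (nR (n - 2) / nR (n - 1)) (alpha k)) | J <- subsets n 3, k <- ks] ++
  [seq cv n (A J) (vscale (nR (n - 1) / nR (n - 3)) (A K)) | J <- subsets n 1, K <- subsets n 2] ++
  [seq cv n vzero (A K) | K <- subsets n 2].

Definition tensor (n : nat) : lmodType R := {ffun {ffun 'I_5 -> 'I_(4 * n)} -> R^o}.

(** v^{(x)5}; index j : 'I_(4n) corresponds to 1-based position j+1 *)
Definition tpow5 (n : nat) (v : vec) : tensor n :=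
  [ffun f : {ffun 'I_5 -> 'I_(4 * n)} => \prod_(k < 5) v (f k).+1].

Definition W1 (n : nat) : seq (tensor n) := [seq tpow5 n u | u <- U n].
Definition W2 (n : nat) : seq (tensor n) := [seq tpow5 n (piv n u) | u <- U n].

End Defs.

(** Linear independence of the SET of elements of a list. *)
Definition lin_indep (R : realFieldType) (V : lmodType R) (S : seq V) : Prop :=
  forall c : V -> R, \sum_(v <- undup S) c v *: v = 0 ->
    forall v, v \in S -> c v = 0.

Definition in_span (R : realFieldType) (V : lmodType R) (S : seq V) (t : V) : Prop :=
  exists c : V -> R, t = \sum_(v <- undup S) c v *: v.

From HB Require Import structures.
From mathcomp Require Import all_boot all_order all_algebra.
From mathcomp Require Import zify ring.
From Stdlib Require List.
Set Implicit Arguments. Unset Strict Implicit. Unset Printing Implicit Defensive.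
Import Order.TTheory GRing.Theory Num.Theory.
Local Open Scope ring_scope.

(* Every vector of U is constant on the blocks {2i-1, 2i} of each half of the
   positions of R^(4n), and every vector of pi U on the blocks shifted by one; so
   each tensor of W is described by a pairing, the sets A, B of blocks carrying
   its support in the two halves, and its values there.  Rank the tensors of W by
   the number of even positions in their support.  The entry indexed by one even
   position in each block of A and B, padded up to five indices by a position
   whose block in the other pairing lies outside the support, vanishes on every
   other tensor of W of no larger rank except those with the same supports and
   pairing; these are separated from it by their coefficient, since the
   coefficients of U with the same support sizes are distinct.  Hence one entry,
   or a combination of two entries, is triangular with respect to the rank, which
   gives linear independence; W1 and W2 are disjoint, hence the second claim. *)


Section TriangularCriterion.
Variables (R : realFieldType) (I : finType).
Local Notation tens := {ffun I -> R^o}.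

Definition entry_comb (a b : R) (i j : I) (t : tens) : R := a * t i + b * t j.

Lemma entry_comb_sum (S : seq tens) (c : tens -> R) a b i j :
  entry_comb a b i j (\sum_(v <- S) c v *: v) =
  \sum_(v <- S) c v * entry_comb a b i j v.
Proof.
rewrite /entry_comb !sum_ffunE !mulr_sumr -big_split /=.
by apply: eq_bigr => v _; rewrite !ffunE /GRing.scale /=; ring.
Qed.

Lemma entry_comb_single i (t : tens) : entry_comb 1 0 i i t = t i.
Proof. by rewrite /entry_comb mul1r mul0r addr0. Qed.

(* By induction from the top rank down: the functional attached to [t] sees only
   [c t] among the coefficients not yet known to vanish. *)
Lemma triangular_lin_indep (S : seq tens) (rk : tens -> nat) :
  (forall t, t \in S -> exists a b i j, entry_comb a b i j t != 0 /\
     forall t', t' \in S -> t' != t -> (rk t' <= rk t)%N ->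
       entry_comb a b i j t' = 0) ->
  lin_indep S.
Proof.
move=> sep c sum0.
pose B := (\max_(v <- S) rk v).+1.
have rk_lt v : v \in S -> (rk v < B)%N.
  by move=> vS; rewrite ltnS (leq_bigmax_seq _ vS).
suff c0 k v : v \in S -> (B <= k + rk v)%N -> c v = 0.
  by move=> v vS; apply: (c0 B v vS); rewrite leq_addr.
elim: k v => [|k IHk] v vS hk; first by have := rk_lt v vS; lia.
have [a [b [i [j [nz kill]]]]] := sep v vS.
have := congr1 (entry_comb a b i j) sum0.
rewrite entry_comb_sum {2}/entry_comb !ffunE !mulr0 addr0.
rewrite (bigD1_seq v) ?mem_undup ?undup_uniq //= big1_seq => [|w /andP[wv]].
  by rewrite addr0 => /eqP; rewrite mulf_eq0 (negbTE nz) orbF => /eqP.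
rewrite mem_undup => wS; have [le|lt] := leqP (rk w) (rk v).
  by rewrite kill ?mulr0.
by rewrite (IHk w wS) ?mul0r //; lia.
Qed.

End TriangularCriterion.

Lemma lin_indep_cat_span (R : realFieldType) (V : lmodType R) (S1 S2 : seq V) :
  lin_indep (S1 ++ S2) -> {in S1, forall v, v \notin S2} ->
  forall T1 T2 : V, in_span S1 T1 -> in_span S2 T2 -> T1 + T2 = 0 ->
  T1 = 0 /\ T2 = 0.
Proof.
move=> indep disj T1 T2 [c1 ->] [c2 ->] sum0.
pose c v := if v \in S1 then c1 v else c2 v.
have split_sum : \sum_(v <- undup (S1 ++ S2)) c v *: v =
    \sum_(v <- undup S1) c1 v *: v + \sum_(v <- undup S2) c2 v *: v.
  rewrite undup_cat big_cat (@eq_in_filter _ _ predT) ?filter_predT; last first.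
    by move=> v; rewrite mem_undup => /disj ->.
  congr (_ + _); apply: eq_big_seq => v; rewrite mem_undup /c.
    by move=> ->.
  by case: ifP => // v1 v2; move: (disj v v1); rewrite v2.
have c0 := indep c (etrans split_sum sum0).
split; apply: big1_seq => v /andP[_]; rewrite mem_undup => vS.
  by move: (c0 v); rewrite mem_cat vS /c vS => ->; rewrite ?scale0r.
move: (c0 v); rewrite mem_cat vS orbT /c.
by case: ifP => [v1|_ -> //]; [move: (disj v v1); rewrite vS | rewrite scale0r].
Qed.

Lemma half_mul2 i : ((2 * i)./2 = i)%N.
Proof. by rewrite mul2n doubleK. Qed.

Lemma half_mul2S i : ((2 * i).+1./2 = i)%N.
Proof. by rewrite mul2n; exact: (half_bit_double i true). Qed.

Lemma prod_nseq (R : pzSemiRingType) (T : Type) e (x : T) (F : T -> R) :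
  \prod_(y <- nseq e x) F y = F x ^+ e.
Proof. by rewrite big_nseq; elim: e => //= e ->; rewrite exprS. Qed.

Section BlockTensors.
Variables (R : realFieldType) (n : nat).
Local Notation tens := (tensor R n).
Local Notation idx := {ffun 'I_5 -> 'I_(4 * n)}.

(* A vector of R^(4n), with 0-based positions, that is constant on blocks: each
   half is cut into the n blocks {2i, 2i+1}, or, when [shifted], into the blocks
   {2i-1, 2i} (block 0 being {2n-1, 0}); it equals [valA] on the blocks of
   [suppA] in the first half, [valB] on the blocks of [suppB] in the second half,
   and 0 elsewhere. *)
Record blockdesc := BlockDesc {
  shifted : bool; suppA : {set 'I_n}; suppB : {set 'I_n}; valA : R; valB : R }.

Definition has_idx (S : {set 'I_n}) (x : nat) : bool := [exists i in S, val i == x].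

Definition block (m : bool) (r : nat) : nat :=
  if m then (if (r.+1 < 2 * n)%N then (r.+1)./2 else 0%N) else r./2.

Definition bvec (d : blockdesc) (j : nat) : R :=
  if (j < 2 * n)%N then
    (if has_idx (suppA d) (block (shifted d) j) then valA d else 0)
  else (if has_idx (suppB d) (block (shifted d) (j - 2 * n)) then valB d else 0).

Definition btensor (d : blockdesc) : tens :=
  [ffun f : idx => \prod_(k < 5) bvec d (f k)].

Lemma has_idxE (S : {set 'I_n}) (i : 'I_n) : has_idx S i = (i \in S).
Proof.
apply/existsP/idP => [[i' /andP[i'S /eqP/val_inj <-]] //|iS].
by exists i; rewrite iS eqxx.
Qed.

Lemma has_idxP (S : {set 'I_n}) x :
  reflect (exists2 i : 'I_n, i \in S & val i = x) (has_idx S x).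
Proof.
apply: (iffP existsP) => [[i /andP[iS /eqP <-]]|[i iS <-]]; exists i => //.
by rewrite iS eqxx.
Qed.

Lemma has_idx_subset (S S' : {set 'I_n}) x :
  S \subset S' -> has_idx S x -> has_idx S' x.
Proof.
move=> /subsetP sub /existsP[i /andP[iS ix]]; apply/existsP; exists i.
by rewrite (sub _ iS) ix.
Qed.

Lemma block_even m j : ~~ odd j -> (j < 2 * n)%N -> block m j = j./2.
Proof.
move=> ev lt; rewrite /block; case: m => //.
have -> : (j.+1 < 2 * n)%N.
  rewrite ltn_neqAle lt andbT; apply/eqP => E.
  by move: (congr1 odd E); rewrite /= ev oddM.
by rewrite -uphalfE uphalf_half (negbTE ev).
Qed.

Definition anchorsA (S : {set 'I_n}) : seq nat := [seq (2 * val i)%N | i <- enum S].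
Definition anchorsB (S : {set 'I_n}) : seq nat :=
  [seq (2 * n + 2 * val i)%N | i <- enum S].

Lemma prod_if_subset (S S' : {set 'I_n}) (c : R) :
  \prod_(i in S) (if i \in S' then c else 0) =
  if S \subset S' then c ^+ #|S| else 0.
Proof.
case: ifP => [/subsetP sub|/subsetPn [i iS iS']].
  by rewrite -prodr_const; apply: eq_bigr => i /sub ->.
by rewrite (bigD1 i) //= (negbTE iS') mul0r.
Qed.

Lemma prod_anchorsA d S : \prod_(x <- anchorsA S) bvec d x =
  if S \subset suppA d then valA d ^+ #|S| else 0.
Proof.
rewrite -prod_if_subset big_map big_enum /=; apply: eq_bigr => i _.
have lt_i := ltn_ord i.
rewrite /bvec ifT; last by lia.
by rewrite block_even ?half_mul2 ?has_idxE ?oddM //; lia.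
Qed.

Lemma prod_anchorsB d S : \prod_(x <- anchorsB S) bvec d x =
  if S \subset suppB d then valB d ^+ #|S| else 0.
Proof.
rewrite -prod_if_subset big_map big_enum /=; apply: eq_bigr => i _.
have lt_i := ltn_ord i.
rewrite /bvec ifF; last by lia.
by rewrite addKn block_even ?half_mul2 ?has_idxE ?oddM //; lia.
Qed.


(* [odd_pos m i] is the odd position of block [i] in pairing [m]; in the other
   pairing it lies in the neighbouring block [nbr m i]. *)
Definition odd_pos (m : bool) (i : nat) : nat :=
  if m then (if i == 0%N then (2 * n).-1 else (2 * i).-1) else (2 * i).+1.
Definition nbr (m : bool) (i : nat) : nat :=
  if m then (if i == 0%N then n.-1 else i.-1)
  else (if (i.+1 < n)%N then i.+1 else 0%N).
Definition pad_pos (m h : bool) (i : nat) : nat :=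
  ((if h then 0 else 2 * n) + odd_pos m i)%N.

Lemma odd_pos_lt m (i : 'I_n) : (odd_pos m i < 2 * n)%N.
Proof. by have := ltn_ord i; rewrite /odd_pos; case: m; [case: ifP => /eqP|]; lia. Qed.

Lemma pad_pos_lt m h (i : 'I_n) : (pad_pos m h i < 4 * n)%N.
Proof. by have := odd_pos_lt m i; rewrite /pad_pos; case: h; lia. Qed.

Lemma block_odd_pos m m' (i : 'I_n) :
  block m' (odd_pos m i) = if m' == m then val i else nbr m i.
Proof.
have lt_i := ltn_ord i.
case: m; case: m'; rewrite /odd_pos /nbr /block [_ == _]/=.
- case: eqP => [i0|i_neq0].
    by rewrite ifF ?i0 //; lia.
  by rewrite ifT; [rewrite prednK ?half_mul2 //|]; lia.
- case: eqP => [_|i_neq0].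
    by rewrite (_ : (2 * n).-1 = (2 * n.-1).+1)%N ?half_mul2S //; lia.
  by rewrite (_ : (2 * i).-1 = (2 * i.-1).+1)%N ?half_mul2S //; lia.
- rewrite (_ : ((2 * i).+2 < 2 * n)%N = (i.+1 < n)%N); last by lia.
  by case: ifP => // _; rewrite (_ : (2 * i).+2 = 2 * i.+1)%N ?half_mul2 //; lia.
- by rewrite half_mul2S.
Qed.

Lemma has_idx_up (S : {set 'I_n}) a : has_idx S a ->
  (forall x, has_idx S x -> (x.+1 < n)%N -> has_idx S x.+1) ->
  forall k, (a <= k < n)%N -> has_idx S k.
Proof.
move=> Sa Ssucc k /andP[]; elim: k => [|k IHk] le lt.
  by move: le; rewrite leqn0 => /eqP <-.
have [le'|lt'] := leqP a k; first by apply: Ssucc => //; apply: IHk => //; lia.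
by rewrite (_ : k.+1 = a) //; lia.
Qed.

Lemma has_idx_down (S : {set 'I_n}) a : has_idx S a ->
  (forall x, has_idx S x -> (0 < x)%N -> has_idx S x.-1) ->
  forall k, (k <= a)%N -> has_idx S k.
Proof.
move=> Sa Spred k le; rewrite -(subKn le).
elim: (a - k)%N => [|j IHj]; first by rewrite subn0.
have [lt|ge] := ltnP j a; last by rewrite (_ : (a - j.+1 = a - j)%N) //; lia.
by rewrite (_ : (a - j.+1 = (a - j).-1)%N); [apply: Spred => //; lia | lia].
Qed.

Lemma has_idx_full (S : {set 'I_n}) : (forall k, (k < n)%N -> has_idx S k) -> #|S| = n.
Proof.
move=> full; rewrite (_ : S = setT) ?cardsT ?card_ord //.
by apply/setP => i; rewrite inE -has_idxE full.
Qed.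

Lemma exists_boundary_block m (S : {set 'I_n}) : S != set0 -> (#|S| < n)%N ->
  exists2 i : 'I_n, i \in S & ~~ has_idx S (nbr m i).
Proof.
move=> /set0Pn [i0 i0S] ltS.
apply/exists_inP; apply: contraLR ltS; rewrite negb_exists_in => /forall_inP closed.
have Snbr x : has_idx S x -> has_idx S (nbr m x).
  by case/has_idxP => i iS <-; move/negPn: (closed i iS).
rewrite -leqNgt (has_idx_full _) //.
have lt_i0 := ltn_ord i0.
have Si0 : has_idx S i0 by rewrite has_idxE.
clear closed; case: m Snbr => Snbr /=.
- have Spred x : has_idx S x -> (0 < x)%N -> has_idx S x.-1.
    by move=> Sx lt; have := Snbr x Sx; rewrite /nbr; case: eqP => //; lia.
  have Sn : has_idx S n.-1 by apply: (Snbr 0%N); apply: (has_idx_down Si0 Spred).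
  by move=> k lt; apply: (has_idx_down Sn Spred); lia.
- have Ssucc x : has_idx S x -> (x.+1 < n)%N -> has_idx S x.+1.
    by move=> Sx lt; have := Snbr x Sx; rewrite /nbr lt.
  have Sn : has_idx S n.-1 by apply: (has_idx_up Si0 Ssucc); lia.
  have S0 : has_idx S 0 by have := Snbr _ Sn; rewrite /nbr ifF //; lia.
  by move=> k lt; apply: (has_idx_up S0 Ssucc); lia.
Qed.

Definition supp (d : blockdesc) (h : bool) := if h then suppA d else suppB d.
Definition coef (d : blockdesc) (h : bool) := if h then valA d else valB d.

Lemma bvec_pad_pos d m h (i : 'I_n) : bvec d (pad_pos m h i) =
  if has_idx (supp d h) (block (shifted d) (odd_pos m i)) then coef d h else 0.
Proof.
have := odd_pos_lt m i; rewrite /bvec /pad_pos; case: h => /= lt; first by rewrite lt.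
by rewrite ifF ?addKn //; lia.
Qed.

(* [ffun=> j] is the diagonal index (j, ..., j). *)
Definition even_rank (t : tens) : nat :=
  #|[set j : 'I_(4 * n) | ~~ odd j && (t [ffun=> j] != 0)]|.

Definition even_support (A B : {set 'I_n}) : {set 'I_(4 * n)} :=
  [set j : 'I_(4 * n) | ~~ odd j &&
     (if (j < 2 * n)%N then has_idx A j./2 else has_idx B (j - 2 * n)./2)].

Lemma even_rank_btensor d : valA d != 0 -> valB d != 0 ->
  even_rank (btensor d) = #|even_support (suppA d) (suppB d)|.
Proof.
move=> nzA nzB; apply: eq_card => j; rewrite !inE.
case ev: (odd j) => //=.
rewrite ffunE (eq_bigr (fun _ => bvec d j)); last by move=> k _; rewrite ffunE.
rewrite prodr_const card_ord expf_eq0 /= /bvec.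
have lt_j := ltn_ord j.
case: ifP => lt; rewrite block_even ?ev; try by case: ifP; rewrite ?eqxx.
all: rewrite ?oddB ?ev ?oddM //; lia.
Qed.

Lemma even_support_subset (A B A' B' : {set 'I_n}) :
  A \subset A' -> B \subset B' -> even_support A B \subset even_support A' B'.
Proof.
move=> sA sB; apply/subsetP => j; rewrite !inE => /andP[-> /=].
by case: ifP => _; [apply: has_idx_subset sA | apply: has_idx_subset sB].
Qed.

Lemma even_support_eq (A B A' B' : {set 'I_n}) :
  A \subset A' -> B \subset B' ->
  (#|even_support A' B'| <= #|even_support A B|)%N -> A = A' /\ B = B'.
Proof.
move=> sA sB le.
have E : even_support A B = even_support A' B'.
  by apply/eqP; rewrite eqEcard even_support_subset.
split; apply/eqP; rewrite eqEsubset ?sA ?sB //=; apply/subsetP => i iS;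
  have lt_i := ltn_ord i.
- have lt : (2 * i < 4 * n)%N by lia.
  have : Ordinal lt \in even_support A' B'.
    by rewrite inE /= oddM ifT ?half_mul2 ?has_idxE //; lia.
  by rewrite -E inE /= oddM ifT ?half_mul2 ?has_idxE //; lia.
- have lt : (2 * n + 2 * i < 4 * n)%N by lia.
  have : Ordinal lt \in even_support A' B'.
    by rewrite inE /= oddD !oddM ifF ?addKn ?half_mul2 ?has_idxE //; lia.
  by rewrite -E inE /= oddD !oddM ifF ?addKn ?half_mul2 ?has_idxE //; lia.
Qed.

End BlockTensors.

Lemma ltr_frac (R : realFieldType) (x y z w : R) : 0 < y -> 0 < w ->
  x * w < z * y -> x / y < z / w.
Proof. by move=> y_gt0 w_gt0; rewrite ltr_pdivrMr // mulrAC ltr_pdivlMr. Qed.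

Section CoefficientTypes.
Variables (R : realFieldType) (n : nat).
Hypothesis n_ge5 : (5 <= n)%N.
Local Notation N k := (nR R k).

Definition r22_31 : R := N (n - 2) ^+ 2 / (N (n - 3) * N (n - 1)).
Definition r23 : R := N (n - 2) / N (n - 3).
Definition r14 : R := N (n - 1) / N (n - 4).
Definition r24 : R := N (n - 2) / N (n - 4).
Definition r34 : R := N (n - 3) / N (n - 4).
Definition r21 : R := N (n - 2) / N (n - 1).
Definition r13 : R := N (n - 1) / N (n - 3).

(* [utype a b c p]: U contains the vectors (alpha_J | c alpha_K) with #|J| = a and
   #|K| = b (the sum over K being a single alpha_k when b = 1), and [p] is the
   coefficient of the other family of U with the same sizes, or 0 if there is none. *)
Definition utype (a b : nat) (c p : R) : Prop :=
  (a, b, c, p) = (4%N, 0%N, 1, 0) \/ (a, b, c, p) = (3%N, 0%N, 1, 0) \/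
  (a, b, c, p) = (2%N, 0%N, 1, 0) \/ (a, b, c, p) = (1%N, 0%N, 1, 0) \/
  (a, b, c, p) = (4%N, 1%N, 1, 0) \/ (a, b, c, p) = (2%N, 1%N, r22_31, r24) \/
  (a, b, c, p) = (1%N, 1%N, r23, r14) \/ (a, b, c, p) = (1%N, 1%N, r14, r23) \/
  (a, b, c, p) = (3%N, 2%N, 1, 0) \/ (a, b, c, p) = (2%N, 2%N, r23, 0) \/
  (a, b, c, p) = (2%N, 1%N, r24, r22_31) \/ (a, b, c, p) = (0%N, 1%N, 1, 0) \/
  (a, b, c, p) = (3%N, 1%N, r34, r21) \/ (a, b, c, p) = (3%N, 1%N, r21, r34) \/
  (a, b, c, p) = (1%N, 2%N, r13, 0) \/ (a, b, c, p) = (0%N, 2%N, 1, 0).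

Local Ltac case_utype H := repeat (destruct H as [H|H]); inversion H; subst; clear H.

Lemma utype_swap a b c p c' p' : utype a b c p -> utype b a c' p' -> (a + b != 5)%N.
Proof. by move=> H1 H2; case_utype H1; case_utype H2. Qed.

Lemma utype_coef a b c p c' p' : utype a b c p -> utype a b c' p' -> c' = c \/ c' = p.
Proof. by move=> H1 H2; case_utype H1; case_utype H2; first [by left | by right]. Qed.

Lemma nR_sub_gt0 k : (k <= 4)%N -> 0 < N (n - k).
Proof. by move=> le; rewrite /nR ltr0n; lia. Qed.

Lemma ratios_gt0 :
  [/\ 0 < r22_31, 0 < r23, 0 < r14, 0 < r24 & [/\ 0 < r34, 0 < r21 & 0 < r13]].
Proof.
have h1 := @nR_sub_gt0 1 isT; have h2 := @nR_sub_gt0 2 isT.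
have h3 := @nR_sub_gt0 3 isT; have h4 := @nR_sub_gt0 4 isT.
by repeat split; rewrite ?divr_gt0 ?mulr_gt0 ?exprn_gt0 ?h1 ?h2 ?h3 ?h4.
Qed.

Lemma r22_31_lt_r24 : r22_31 < r24.
Proof.
apply: ltr_frac; rewrite ?mulr_gt0 ?nR_sub_gt0 //.
by rewrite /nR -natrX -!natrM ltr_nat; nia.
Qed.

Lemma r23_lt_r14 : r23 < r14.
Proof.
apply: ltr_frac; rewrite ?nR_sub_gt0 //.
by rewrite /nR -!natrM ltr_nat; nia.
Qed.

Lemma r21_lt_r34 : r21 < r34.
Proof.
apply: ltr_frac; rewrite ?nR_sub_gt0 //.
by rewrite /nR -!natrM ltr_nat; nia.
Qed.

Lemma utype_props a b c p : utype a b c p ->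
  [/\ 0 < c, 0 <= p, p != c, (0 < a + b <= 5)%N &
   [/\ (a <= 4)%N, (b <= 4)%N & [|| a == 0%N, b == 0%N | a + b == 5]%N -> p = 0]].
Proof.
have [p1 p2 p3 p4 [p5 p6 p7]] := ratios_gt0.
have q1 := r22_31_lt_r24; have q2 := r23_lt_r14; have q3 := r21_lt_r34.
move=> H; case_utype H; (split; [ | | | | split]) => //;
  rewrite ?ltW ?lexx ?neq_lt ?ltr01 ?p1 ?p2 ?p3 ?p4 ?p5 ?p6 ?p7 ?q1 ?q2 ?q3 ?orbT //.
Qed.

End CoefficientTypes.

Section Separation.
Variables (R : realFieldType) (n : nat).
Hypothesis n_ge5 : (5 <= n)%N.
Local Notation tens := (tensor R n).
Local Notation blockdesc := (blockdesc R n).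
Local Notation btensor := (@btensor R n).
Local Notation bvec := (@bvec R n).
Local Notation idx := {ffun 'I_5 -> 'I_(4 * n)}.
Local Notation rank t := (@even_rank R n t).
Local Notation pad_pos := (pad_pos n).
Local Notation nbr := (nbr n).

Lemma four_n_gt0 : (0 < 4 * n)%N.
Proof. by lia. Qed.

Definition tindex (L : seq nat) : idx :=
  [ffun k : 'I_5 => insubd (Ordinal four_n_gt0) (nth 0%N L k)].

Lemma btensor_tindex d L : size L = 5%N -> all (fun x => x < 4 * n)%N L ->
  btensor d (tindex L) = \prod_(x <- L) bvec d x.
Proof.
move=> L5 Llt; rewrite ffunE (big_nth 0%N) L5 big_mkord.
apply: eq_bigr => k _; rewrite ffunE insubdK //.
by apply: (allP Llt); apply: mem_nth; rewrite L5.
Qed.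

Definition pad_index (A B : {set 'I_n}) e k : idx :=
  tindex (anchorsA A ++ anchorsB B ++ nseq e k).

Lemma btensor_pad_index d (A B : {set 'I_n}) e k :
  (#|A| + #|B| + e = 5)%N -> (k < 4 * n)%N ->
  btensor d (pad_index A B e k) =
  if (A \subset suppA d) && (B \subset suppB d) then
    valA d ^+ #|A| * valB d ^+ #|B| * bvec d k ^+ e
  else 0.
Proof.
move=> size5 lt_k; rewrite btensor_tindex; last 2 first.
- by rewrite !size_cat !size_map -!cardE size_nseq addnA.
- rewrite !all_cat; apply/and3P; split; apply/allP => x.
  + by case/mapP => i _ -> /=; have := ltn_ord i; lia.
  + by case/mapP => i _ -> /=; have := ltn_ord i; lia.
  + by case/nseqP => ->.
rewrite !big_cat /= prod_anchorsA prod_anchorsB prod_nseq.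
by case: (A \subset _); case: (B \subset _); rewrite /= ?(mulr0, mul0r, mulrA).
Qed.

(* The descriptions of the vectors of U (unshifted) and of pi U (shifted): pi
   exchanges the two halves, so the half carrying alpha_J, where the value is 1,
   is the first one exactly for unshifted descriptions. *)
Definition admissible (d : blockdesc) : Prop :=
  coef d (~~ shifted d) = 1 /\
  exists p,
    utype n #|supp d (~~ shifted d)| #|supp d (shifted d)| (coef d (shifted d)) p.

Definition separates (d : blockdesc) (phi : tens -> R) : Prop :=
  phi (btensor d) != 0 /\
  forall d', admissible d' -> (rank (btensor d') <= rank (btensor d))%N -> d' <> d ->
    phi (btensor d') = 0.

Lemma admissible_gt0 d : admissible d -> 0 < valA d /\ 0 < valB d.
Proof.
case: d => [[] A B a b] [/= one [p /(utype_props n_ge5) [c_gt0 _]]];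
  by rewrite /coef /= in one c_gt0; rewrite one ltr01.
Qed.

Lemma blockdesc_eq (d d' : blockdesc) : shifted d' = shifted d ->
  suppA d' = suppA d -> suppB d' = suppB d ->
  coef d' (~~ shifted d) = coef d (~~ shifted d) ->
  coef d' (shifted d) = coef d (shifted d) -> d' = d.
Proof.
case: d => m A B a b; case: d' => m' A' B' a' b' /= -> -> ->.
by case: m; rewrite /coef /= => -> ->.
Qed.

Lemma card_supp (d : blockdesc) :
  (#|supp d (~~ shifted d)| + #|supp d (shifted d)| = #|suppA d| + #|suppB d|)%N.
Proof. by rewrite /supp; case: (shifted d) => //=; rewrite addnC. Qed.

Section SeparatorOf.
Variables (d : blockdesc) (p : R).
Hypotheses (d_one : coef d (~~ shifted d) = 1)
  (d_type :
     utype n #|supp d (~~ shifted d)| #|supp d (shifted d)| (coef d (shifted d)) p).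

Local Notation A := (suppA d).
Local Notation B := (suppB d).

Lemma d_admissible : admissible d.
Proof. by split => //; exists p. Qed.

Lemma btensor_pad_index_eq d' e k : admissible d' ->
  (rank (btensor d') <= rank (btensor d))%N ->
  (#|A| + #|B| + e = 5)%N -> (k < 4 * n)%N ->
  btensor d' (pad_index A B e k) =
  if (suppA d' == A) && (suppB d' == B) then
    valA d' ^+ #|A| * valB d' ^+ #|B| * bvec d' k ^+ e
  else 0.
Proof.
move=> adm' rank_le size5 lt_k; rewrite btensor_pad_index //.
have [a_gt0 b_gt0] := admissible_gt0 d_admissible.
have [a'_gt0 b'_gt0] := admissible_gt0 adm'.
case: ifP => [/andP[sA sB]|sub]; last first.
  by case: eqP sub => [<-|//]; case: eqP => [<-|//]; rewrite !subxx.
move: rank_le; rewrite !even_rank_btensor ?gt_eqF // => rank_le.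
by have [-> ->] := even_support_eq sA sB rank_le; rewrite !eqxx.
Qed.

Lemma same_shift_coef d' : admissible d' -> d' <> d ->
  suppA d' = A -> suppB d' = B -> shifted d' = shifted d -> coef d' (shifted d) = p.
Proof.
move=> [one' [p' type']] neq eA eB em; rewrite em in one' type'.
rewrite /supp eA eB -/(supp d _) -/(supp d _) in type'.
case: (utype_coef d_type type') => // c_eq; case: neq.
by apply: blockdesc_eq; rewrite ?one' ?d_one.
Qed.

Lemma other_shift_card d' : admissible d' -> shifted d' != shifted d ->
  suppA d' = A -> suppB d' = B -> (#|A| + #|B| != 5)%N.
Proof.
move=> [_ [p' type']] em eA eB.
have em' : shifted d' = ~~ shifted d by move: em; case: (shifted d'); case: (shifted d).
rewrite em' negbK /supp eA eB -/(supp d _) -/(supp d _) in type'.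
by rewrite -card_supp; apply: (utype_swap d_type type').
Qed.

Lemma other_shift_of_p0 d' : p = 0 -> admissible d' -> d' <> d ->
  suppA d' = A -> suppB d' = B -> shifted d' != shifted d.
Proof.
move=> p0 adm' neq eA eB; apply/eqP => em.
have := same_shift_coef adm' neq eA eB em; rewrite p0 /coef.
by have [a_gt0 b_gt0] := admissible_gt0 adm'; case: (shifted d) => c0;
  [move: a_gt0 | move: b_gt0]; rewrite c0 ltxx.
Qed.

Lemma bvec_pad_boundary d' h (i : 'I_n) : supp d' h = supp d h ->
  i \in supp d h -> ~~ has_idx (supp d h) (nbr (shifted d) i) ->
  bvec d' (pad_pos (shifted d) h i) = if shifted d' == shifted d then coef d' h else 0.
Proof.
move=> eS iS out; rewrite bvec_pad_pos block_odd_pos eS.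
by case: eqP => _; rewrite ?has_idxE ?iS ?(negbTE out).
Qed.

Lemma exists_boundary_supp h : supp d h != set0 ->
  exists2 i : 'I_n, i \in supp d h & ~~ has_idx (supp d h) (nbr (shifted d) i).
Proof.
have [_ _ _ _ [le_a le_b _]] := utype_props n_ge5 d_type.
move=> nz; apply: exists_boundary_block => //.
by move: le_a le_b; rewrite /supp; case: (shifted d); case: (h) => /=; lia.
Qed.

Lemma card_supp_le5 : (#|A| + #|B| <= 5)%N.
Proof. by have [_ _ _ /andP[_ +] _] := utype_props n_ge5 d_type; rewrite card_supp. Qed.

Lemma p_eq0_of_card5 : (#|A| + #|B| = 5)%N -> p = 0.
Proof.
move=> card5; have [_ _ _ _ [_ _ ->]] // := utype_props n_ge5 d_type.
by rewrite card_supp card5 !orbT.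
Qed.

Lemma p_eq0_of_empty : ~~ ((A != set0) && (B != set0)) -> p = 0.
Proof.
move=> empty; have [_ _ _ _ [_ _ ->]] // := utype_props n_ge5 d_type.
move: empty; rewrite negb_and !negbK /supp; case/orP => /eqP ->;
  by case: (shifted d); rewrite /= ?cards0 ?eqxx ?orbT.
Qed.

Lemma separator_full : (#|A| + #|B| = 5)%N ->
  separates d (entry_comb 1 0 (pad_index A B 0 0) (pad_index A B 0 0)).
Proof.
move=> card5; have card5' : (#|A| + #|B| + 0 = 5)%N by rewrite addn0.
have [a_gt0 b_gt0] := admissible_gt0 d_admissible.
split=> [|d' adm' rank_le neq]; rewrite entry_comb_single.
  rewrite btensor_pad_index ?four_n_gt0 // !subxx expr0 mulr1.
  by rewrite mulf_neq0 // expf_neq0 // gt_eqF.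
rewrite btensor_pad_index_eq ?four_n_gt0 //.
case: ifP => [/andP[/eqP eA /eqP eB]|//].
have other := other_shift_of_p0 (p_eq0_of_card5 card5) adm' neq eA eB.
by have := other_shift_card adm' other eA eB; rewrite card5.
Qed.

Section Padded.
Hypothesis card_neq5 : (#|A| + #|B| != 5)%N.
Local Notation e := (5 - (#|A| + #|B|))%N.

Lemma card_pad : (#|A| + #|B| + e = 5)%N.
Proof. by have := card_supp_le5; lia. Qed.

Lemma pad_gt0 : (0 < e)%N.
Proof. by have := card_supp_le5; lia. Qed.

Lemma expr0_pad : (0 : R) ^+ e = 0.
Proof. by rewrite expr0n eqn0Ngt pad_gt0. Qed.

(* On a description with the supports and the pairing of [d], the entry padded
   in the half of value 1 is some X and the other one is X c'^e, where c' is c for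
   [d] and p for any other description. *)
Lemma separator_mixed : A != set0 -> B != set0 ->
  exists a b i j, separates d (entry_comb a b i j).
Proof.
move=> nzA nzB.
have [c_gt0 p_ge0 p_neq_c _ _] := utype_props n_ge5 d_type.
have [a_gt0 b_gt0] := admissible_gt0 d_admissible.
have nz h : supp d h != set0 by rewrite /supp; case: (h).
have [iC iC_in iC_out] := exists_boundary_supp (nz (~~ shifted d)).
have [iV iV_in iV_out] := exists_boundary_supp (nz (shifted d)).
exists (p ^+ e), (-1), (pad_index A B e (pad_pos (shifted d) (~~ shifted d) iC)),
  (pad_index A B e (pad_pos (shifted d) (shifted d) iV)); split.
  rewrite /entry_comb !btensor_pad_index ?card_pad ?pad_pos_lt // !subxx /=.
  rewrite !(bvec_pad_boundary (d' := d)) // eqxx d_one expr1n.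
  have -> : forall X, p ^+ e * (X * 1) + -1 * (X * coef d (shifted d) ^+ e) =
            X * (p ^+ e - coef d (shifted d) ^+ e) by move=> X; ring.
  rewrite mulf_neq0 //; first by rewrite mulf_neq0 // expf_neq0 // gt_eqF.
  by rewrite subr_eq0 eqrXn2 ?pad_gt0 ?(ltW c_gt0).
move=> d' adm' rank_le neq.
rewrite /entry_comb !btensor_pad_index_eq ?card_pad ?pad_pos_lt //.
case: ifP => [/andP[/eqP eA /eqP eB]|_]; last by rewrite !mulr0 addr0.
have eS h : supp d' h = supp d h by rewrite /supp eA eB.
rewrite !(bvec_pad_boundary (d' := d')) ?eS //.
case: eqP => [em|_]; last by rewrite expr0_pad !mulr0 addr0.
have [one' _] := adm'; rewrite em in one'.
by rewrite (same_shift_coef adm' neq eA eB em) one' expr1n; ring.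
Qed.

Lemma separator_one_sided : ~~ ((A != set0) && (B != set0)) ->
  exists a b i j, separates d (entry_comb a b i j).
Proof.
move=> one_sided; set h := A != set0.
have [a_gt0 b_gt0] := admissible_gt0 d_admissible.
have nz : supp d h != set0.
  rewrite /supp /h; case: ifP => // /negbFE /eqP A0.
  by have [_ _ _ /andP[+ _] _] := utype_props n_ge5 d_type;
    rewrite card_supp A0 cards0 add0n card_gt0.
have [i i_in i_out] := exists_boundary_supp nz.
set f := pad_index A B e (pad_pos (shifted d) h i).
exists 1, 0, f, f; split=> [|d' adm' rank_le neq]; rewrite entry_comb_single.
  rewrite btensor_pad_index ?card_pad ?pad_pos_lt // !subxx /=.
  rewrite (bvec_pad_boundary (d' := d)) // eqxx.
  by rewrite !mulf_neq0 ?expf_neq0 ?gt_eqF // /coef; case: (h).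
rewrite btensor_pad_index_eq ?card_pad ?pad_pos_lt //.
case: ifP => [/andP[/eqP eA /eqP eB]|//].
rewrite (bvec_pad_boundary (d' := d')) ?eA ?eB //; last by rewrite /supp eA eB.
by rewrite (negbTE (other_shift_of_p0 (p_eq0_of_empty one_sided) adm' neq eA eB))
  expr0_pad mulr0.
Qed.

End Padded.

Lemma exists_separator : exists a b i j, separates d (entry_comb a b i j).
Proof.
have [card5|card_neq5] := eqVneq (#|A| + #|B|)%N 5%N.
  by exists 1, 0, (pad_index A B 0 0), (pad_index A B 0 0); apply: separator_full.
have [/andP[nzA nzB]|one_sided] := boolP ((A != set0) && (B != set0)).
  exact: separator_mixed.
exact: separator_one_sided.
Qed.

End SeparatorOf.

Lemma admissible_separator d : admissible d ->
  exists a b i j, separates d (entry_comb a b i j).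
Proof. by case=> one [p type]; apply: (exists_separator one type). Qed.

End Separation.

Lemma In_cat (T : Type) (x : T) s1 s2 :
  List.In x (s1 ++ s2) -> List.In x s1 \/ List.In x s2.
Proof.
elim: s1 => [|y s IHs] /= xs; first by right.
by case: xs => [yx|/IHs]; tauto.
Qed.

Lemma In_map (T1 T2 : Type) (f : T1 -> T2) s y :
  List.In y (map f s) -> exists2 x, List.In x s & y = f x.
Proof.
elim: s => [|x s IHs] //= [<-|/IHs [z zs ->]]; first by exists x; [left|].
by exists z; [right|].
Qed.

Lemma In_flatten (T : Type) (x : T) ss :
  List.In x (flatten ss) -> exists2 s, List.In s ss & List.In x s.
Proof.
elim: ss => [|s ss IHss] //= xs.
case: (In_cat xs) => [{}xs|/IHss [s' s'ss xs']]; first by exists s; [left|].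
by exists s'; [right|].
Qed.

Lemma In_allpairs (T1 T2 T3 : Type) (f : T1 -> T2 -> T3) s t y :
  List.In y [seq f a b | a <- s, b <- t] ->
  exists a b, [/\ List.In a s, List.In b t & y = f a b].
Proof.
move=> y_in; have [l l_in y_l] := In_flatten y_in.
have [a a_s l_def] := In_map l_in; rewrite l_def in y_l.
by have [b b_t ->] := In_map y_l; exists a, b.
Qed.

Lemma In_mem (T : eqType) (x : T) s : List.In x s -> x \in s.
Proof.
by elim: s => [|y s IHs] //= [->|/IHs]; rewrite inE ?eqxx // => ->; rewrite orbT.
Qed.

Lemma mem_map_In (T1 : Type) (T2 : eqType) (f : T1 -> T2) s y :
  y \in map f s -> exists2 x, List.In x s & y = f x.
Proof.
elim: s => [|x s IHs] //=; rewrite inE => /orP [/eqP ->|/IHs [z zs ->]].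
  by exists x; [left|].
by exists z; [right|].
Qed.

Section BlockwiseVectors.
Variables (R : realFieldType) (n : nat).
Local Notation vec := (vec R).

Definition blockwise (S : {set 'I_n}) (c : R) (a : vec) :=
  forall j, (j < 2 * n)%N -> a j.+1 = if has_idx S j./2 then c else 0.

Lemma alphaE k j : alpha R k j.+1 = if (j./2).+1 == k then 1 else 0.
Proof.
rewrite /alpha; congr (if _ then _ else _).
have := odd_double_half j; move: (odd j) (j./2) => b h.
by rewrite -muln2 => <-; case: b; apply/idP/idP => [/orP[]|] /eqP; (try apply/orP); lia.
Qed.

Lemma blockwise_alpha (i : 'I_n) : blockwise [set i] 1 (alpha R i.+1).
Proof.
move=> j _; rewrite alphaE eqSS; congr (if _ then _ else _).
by apply/eqP/idP => [->|/has_idxP [i' /set1P -> //]]; rewrite has_idxE set11.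
Qed.

Lemma blockwise_asum (J : {set 'I_n}) : blockwise J 1 (asum R J).
Proof.
move=> j _; rewrite /asum; case: ifP => [/has_idxP [i iJ ij]|notJ].
  rewrite (bigD1 i) //= alphaE ij eqxx big1 ?addr0 // => i' /andP[_ i'i].
  by rewrite alphaE -ij eqSS; case: eqP => // /val_inj ii'; rewrite ii' eqxx in i'i.
rewrite big1 // => i iJ; rewrite alphaE eqSS; case: eqP => // ij.
by rewrite ij has_idxE iJ in notJ.
Qed.

Lemma blockwise_zero c : blockwise set0 c (vzero R).
Proof. by move=> j _; case: ifP => // /has_idxP [i]; rewrite inE. Qed.

Lemma blockwise_scale S c a : blockwise S 1 a -> blockwise S c (vscale c a).
Proof. by move=> aS j lt; rewrite /vscale aS //; case: ifP; rewrite ?mulr1 ?mulr0. Qed.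

Lemma cv_bvec J K c a b : blockwise J 1 a -> blockwise K c b ->
  forall j, (j < 4 * n)%N -> cv n a b j.+1 = bvec (BlockDesc false J K 1 c) j.
Proof.
move=> aJ bK j lt; rewrite /cv /bvec /=.
case: ifP => lt2; first by rewrite aJ.
by rewrite subSn ?bK //; lia.
Qed.

(* Rotating each half by one position turns the blocks {2i-1, 2i} into the
   shifted ones. *)
Lemma piv_bvec J K c a b : blockwise J 1 a -> blockwise K c b ->
  forall j, (j < 4 * n)%N -> piv n (cv n a b) j.+1 = bvec (BlockDesc true K J c 1) j.
Proof.
move=> aJ bK j lt; rewrite /piv /cv /bvec /block; cbn [shifted suppA suppB valA valB].
have [_|ge2] := ltnP j (2 * n).
  case: ifP => lt3.
    rewrite ifF; last by lia.
    by rewrite (_ : (2 * n + j.+1 + 1 - 2 * n = j.+2)%N) ?bK //; lia.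
  rewrite ifF; last by lia.
  by rewrite (_ : (2 * n + 1 - 2 * n = 1)%N) ?bK //; lia.
rewrite subSn //; case: ifP => lt3; first by rewrite addn1 lt3 aJ.
by rewrite ifT ?aJ //; lia.
Qed.

Lemma tpow5_btensor (u : vec) d :
  (forall j, (j < 4 * n)%N -> u j.+1 = bvec d j) -> tpow5 n u = btensor d.
Proof.
by move=> uE; apply/ffunP => f; rewrite !ffunE; apply: eq_bigr => k _; exact: uE.
Qed.

End BlockwiseVectors.

Section VectorsOfU.
Variables (R : realFieldType) (n : nat).
Local Notation vec := (vec R).

Definition blockwise_pair (u : vec) : Prop :=
  exists (J K : {set 'I_n}) (c p : R) (a b : vec),
    [/\ u = cv n a b, utype n #|J| #|K| c p, blockwise J 1 a & blockwise K c b].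

Lemma blockwise_pairI (J K : {set 'I_n}) c p a b : blockwise J 1 a -> blockwise K c b ->
  utype n #|J| #|K| c p -> blockwise_pair (cv n a b).
Proof. by move=> aJ bK type; exists J, K, c, p, a, b. Qed.

Lemma In_subsets (F : {set 'I_n} -> vec) m u :
  List.In u [seq F J | J <- subsets n m] -> exists J : {set 'I_n}, #|J| = m /\ u = F J.
Proof.
move=> u_in; have [J /In_mem J_in ->] := In_map u_in.
by move: J_in; rewrite /subsets mem_enum inE => /eqP cardJ; exists J.
Qed.

Lemma In_subsets_iota (F : {set 'I_n} -> nat -> vec) m u :
  List.In u [seq F J k | J <- subsets n m, k <- iota 1 n] ->
  exists (J : {set 'I_n}) (i : 'I_n), #|J| = m /\ u = F J i.+1.
Proof.
move=> u_in; have [J [k [/In_mem J_in /In_mem k_in ->]]] := In_allpairs u_in.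
move: J_in k_in; rewrite /subsets mem_enum inE mem_iota => /eqP cardJ /andP[k_gt0 k_le].
have lt : (k.-1 < n)%N by lia.
by exists J, (Ordinal lt); rewrite /= prednK.
Qed.

Lemma In_subsets2 (F : {set 'I_n} -> {set 'I_n} -> vec) m m' u :
  List.In u [seq F J K | J <- subsets n m, K <- subsets n m'] ->
  exists J K : {set 'I_n}, [/\ #|J| = m, #|K| = m' & u = F J K].
Proof.
move=> u_in; have [J [K [/In_mem J_in /In_mem K_in ->]]] := In_allpairs u_in.
move: J_in K_in; rewrite /subsets !mem_enum !inE => /eqP cardJ /eqP cardK.
by exists J, K.
Qed.

Lemma In_iota (F : nat -> vec) u :
  List.In u [seq F k | k <- iota 1 n] -> exists i : 'I_n, u = F i.+1.
Proof.
move=> u_in; have [k /In_mem] := In_map u_in; rewrite mem_iota => /andP[k_gt0 k_le] ->.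
have lt : (k.-1 < n)%N by lia.
by exists (Ordinal lt); rewrite /= prednK.
Qed.

Local Ltac solve_blockwise :=
  first [ exact: blockwise_asum | exact: blockwise_alpha | exact: blockwise_zero
        | apply: blockwise_scale;
          first [exact: blockwise_asum | exact: blockwise_alpha] ].

Local Ltac solve_utype :=
  rewrite /utype; repeat (first [left; reflexivity | right]); reflexivity.

Local Ltac solve_blockwise_pair :=
  eapply blockwise_pairI; [solve_blockwise | solve_blockwise |];
  rewrite ?cards0 ?cards1;
  repeat match goal with h : #|_| = _ |- _ => rewrite h; clear h end; solve_utype.

Lemma U_blockwise u : List.In u (U R n) -> blockwise_pair u.
Proof.
rewrite /U; cbv zeta => uU.
repeat (case: (In_cat uU) => {}uU; [ first
  [ have [J [i [? ->]]] := In_subsets_iota uU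
  | have [J [K [? ? ->]]] := In_subsets2 uU
  | have [i ->] := In_iota uU
  | have [J [? ->]] := In_subsets uU ]; solve_blockwise_pair | ]).
have [K [? ->]] := In_subsets uU; solve_blockwise_pair.
Qed.

End VectorsOfU.

Section Main.
Variables (R : realFieldType) (n : nat).
Hypothesis n_ge5 : (5 <= n)%N.

Lemma W1_btensor t : t \in W1 R n ->
  exists d, [/\ admissible d, shifted d = false & t = btensor d].
Proof.
move=> t_in; have [u /U_blockwise [J [K [c [p [a [b [-> type aJ bK]]]]]]] ->] :=
  mem_map_In t_in.
exists (BlockDesc false J K 1 c); split => //; first by split=> //; exists p.
exact/tpow5_btensor/cv_bvec.
Qed.

Lemma W2_btensor t : t \in W2 R n ->
  exists d, [/\ admissible d, shifted d = true & t = btensor d].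
Proof.
move=> t_in; have [u /U_blockwise [J [K [c [p [a [b [-> type aJ bK]]]]]]] ->] :=
  mem_map_In t_in.
exists (BlockDesc true K J c 1); split => //; first by split=> //; exists p.
exact/tpow5_btensor/piv_bvec.
Qed.

Lemma W_btensor t : t \in W1 R n ++ W2 R n -> exists d, admissible d /\ t = btensor d.
Proof.
by rewrite mem_cat => /orP[/W1_btensor|/W2_btensor] [d [adm _ ->]]; exists d.
Qed.

Lemma W_lin_indep : lin_indep (W1 R n ++ W2 R n).
Proof.
apply: (@triangular_lin_indep R {ffun 'I_5 -> 'I_(4 * n)} _ (@even_rank R n)).
move=> _ /W_btensor [d [adm ->]].
have [a [b [i [j [nz kill]]]]] := admissible_separator n_ge5 adm.
exists a, b, i, j; split => // _ /W_btensor [d' [adm' ->]] neq rank_le.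
by apply: kill => // dd'; rewrite dd' eqxx in neq.
Qed.

Lemma W1_W2_disjoint : {in W1 R n, forall t, t \notin W2 R n}.
Proof.
move=> _ /W1_btensor [d [adm unshifted ->]].
apply/negP => /W2_btensor [d' [adm' sh' eq']].
have [a [b [i [j [nz kill]]]]] := admissible_separator n_ge5 adm.
have neq : d' <> d by move=> dd'; rewrite dd' unshifted in sh'.
by move: nz; rewrite eq' kill ?eqxx // -eq'.
Qed.

End Main.

Theorem proposition5p8 (R : realFieldType) (n : nat) (hn : (5 <= n)%N) :
  lin_indep (W1 R n ++ W2 R n) /\
  (forall T1 T2 : tensor R n,
      in_span (W1 R n) T1 -> in_span (W2 R n) T2 -> T1 + T2 = 0 ->
      T1 = 0 /\ T2 = 0).
Proof.
split; first exact: W_lin_indep.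
exact: lin_indep_cat_span (W_lin_indep hn) (@W1_W2_disjoint R n hn).
Qed.
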